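(* The matrix $U=\frac{1}{\sqrt2}\left(S_0\otimes I_2\otimes I_2+S_1\otimes\sigma_3\otimes\sigma_3+S_2\otimes\sigma_1\otimes\sigma_1+S_3\otimes\sigma_2\otimes\sigma_2\right)$ on $\mathbb{C}^2\otimes\mathbb{C}^2\otimes\mathbb{C}^2$ has $\mathrm{sr}(U)=4$.
   Context: $S_0=\begin{bmatrix}1&0\\0&0\end{bmatrix}$, $S_1=\begin{bmatrix}0&1\\0&0\end{bmatrix}$, $S_2=\begin{bmatrix}0&0\\1&0\end{bmatrix}$, $S_3=\begin{bmatrix}0&0\\0&1\end{bmatrix}$. $I_2$ is the $2\times2$ identity and $\sigma_1=\begin{bmatrix}0&1\\1&0\end{bmatrix}$, $\sigma_2=\begin{bmatrix}0&-i\\i&0\end{bmatrix}$, $\sigma_3=\begin{bmatrix}1&0\\0&-1\end{bmatrix}$ are the Pauli matrices. For a matrix $U$ on $\mathbb{C}^2\otimes\mathbb{C}^2\otimes\mathbb{C}^2$ (systems $A,B,C$), its Schmidt rank $\mathrm{sr}(U)$ is the least integer $r$ such that $U=\sum_{j=1}^r A_j\otimes B_j\otimes C_j$ with $A_j,B_j,C_j$ complex $2\times 2$ matrices (i.e. the tensor rank of $U$). *)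

From HB Require Import structures.
From mathcomp Require Import all_boot all_order all_algebra.
From mathcomp Require Import complex mxtens.
From mathcomp Require Import reals.
Set Implicit Arguments. Unset Strict Implicit. Unset Printing Implicit Defensive.
Import Order.TTheory GRing.Theory Num.Theory.
Local Open Scope ring_scope.
Local Open Scope complex_scope.

Section Defs.
Variable R : realType.
Local Notation C := R[i].

Definition mx2 (a b c d : C) : 'M[C]_2 :=
  \matrix_(i < 2, j < 2)
    (if i == 0 :> nat then (if j == 0 :> nat then a else b)
     else (if j == 0 :> nat then c else d)).

Definition S0 : 'M[C]_2 := mx2 1 0 0 0.
Definition S1 : 'M[C]_2 := mx2 0 1 0 0.
Definition S2 : 'M[C]_2 := mx2 0 0 1 0.
Definition S3 : 'M[C]_2 := mx2 0 0 0 1.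
Definition I2 : 'M[C]_2 := 1%:M.
Definition sigma1 : 'M[C]_2 := mx2 0 1 1 0.
Definition sigma2 : 'M[C]_2 := mx2 0 (- 'i) 'i 0.
Definition sigma3 : 'M[C]_2 := mx2 1 0 0 (-1).

Definition kron3 (A B D : 'M[C]_2) : 'M[C]_(2 * 2 * 2) := (A *t B) *t D.

Definition sr_le (U : 'M[C]_(2 * 2 * 2)) (r : nat) : Prop :=
  exists (A B D : 'I_r -> 'M[C]_2), U = \sum_(j < r) kron3 (A j) (B j) (D j).

Definition schmidt_rank_is (U : 'M[C]_(2 * 2 * 2)) (r : nat) : Prop :=
  sr_le U r /\ forall r', sr_le U r' -> (r <= r')%N.

Definition Umat : 'M[C]_(2 * 2 * 2) :=
  ((Num.sqrt (2 : R))%:C)^-1 *: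
    (kron3 S0 I2 I2 + kron3 S1 sigma3 sigma3
     + kron3 S2 sigma1 sigma1 + kron3 S3 sigma2 sigma2).
End Defs.

(* The upper bound sr(U) <= 4 is the defining expression itself.  The lower
   bound is a flattening argument on the first tensor factor.  For c : 'M_2,
   contracting the first factor of U against c (pairing c with the first-factor
   indices) is linear in U and maps an elementary tensor A (x) B (x) D to
   <c, A> B (x) D.  If U = sum_{j<r} A_j (x) B_j (x) D_j with r < 4, some
   nonzero c is orthogonal to every A_j (linear algebra in the 4-dimensional
   space 'M_2), so this contraction kills U.  For the given U, however, the
   contraction equals (c00 I(x)I + c01 s3(x)s3 + c10 s1(x)s1 + c11 s2(x)s2)/sqrt 2,
   and reading four entries shows it vanishes only for c = 0. *)

From mathcomp Require Import all_boot all_algebra complex reals.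
From mathcomp Require Import all_order mxtens.
Set Implicit Arguments. Unset Strict Implicit. Unset Printing Implicit Defensive.
Import Order.TTheory GRing.Theory Num.Theory.
Local Open Scope ring_scope.
Local Open Scope complex_scope.

Section SchmidtRank.
Variable R : realType.
Local Notation C := R[i].
Local Notation i0 := (ord0 : 'I_2).
Local Notation i1 := (ord_max : 'I_2).

Definition pairing (c X : 'M[C]_2) : C := \sum_(a < 2) \sum_(b < 2) c a b * X a b.

Lemma pairing_mxvec (c X : 'M[C]_2) :
  pairing c X = (mxvec c *m (mxvec X)^T) 0 0.
Proof.
rewrite mxE (reindex _ (curry_mxvec_bij _ _)) /= /pairing pair_bigA.
by apply: eq_bigr => [[a b]] _; rewrite !mxE !mxvecE.
Qed.

Lemma exists_annihilator r (A : 'I_r -> 'M[C]_2) :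
  (r < 4)%N -> exists2 c : 'M[C]_2, c != 0 & forall j, pairing c (A j) = 0.
Proof.
move=> lt_r4; pose M : 'M[C]_(r, 2 * 2) := \matrix_j mxvec (A j).
have : kermx M^T != 0.
  rewrite kermx_eq0 /row_free neq_ltn.
  by rewrite (leq_ltn_trans (rank_leq_col _) lt_r4).
case/rowV0Pn=> v /sub_kermxP vM v_neq0; exists (vec_mx v).
  by rewrite vec_mx_eq0.
move=> j; rewrite pairing_mxvec vec_mxK.
transitivity ((v *m M^T) 0 j); last by rewrite vM mxE.
by rewrite !mxE; apply: eq_bigr => k _; rewrite !mxE.
Qed.

Definition e3 (a b d : 'I_2) : 'I_(2 * 2 * 2) :=
  mxtens_index (mxtens_index (a, b), d).

Lemma kron3E (A B D : 'M[C]_2) a1 b1 d1 a2 b2 d2 :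
  kron3 A B D (e3 a1 b1 d1) (e3 a2 b2 d2) = A a1 a2 * B b1 b2 * D d1 d2.
Proof. by rewrite /kron3 /e3 !tensmxE. Qed.

Definition contract (c : 'M[C]_2) (b1 d1 b2 d2 : 'I_2) (U : 'M[C]_(2 * 2 * 2)) : C :=
  \sum_(a1 < 2) \sum_(a2 < 2) c a1 a2 * U (e3 a1 b1 d1) (e3 a2 b2 d2).

Section Contraction.
Variables (c : 'M[C]_2) (b1 d1 b2 d2 : 'I_2).
Local Notation contr := (contract c b1 d1 b2 d2).

Lemma contract0 : contr 0 = 0.
Proof. by apply: big1 => a1 _; apply: big1 => a2 _; rewrite mxE mulr0. Qed.

Lemma contractD U V : contr (U + V) = contr U + contr V.
Proof.
rewrite /contract -big_split; apply: eq_bigr => a1 _.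
by rewrite -big_split; apply: eq_bigr => a2 _; rewrite mxE mulrDr.
Qed.

Lemma contractZ (x : C) U : contr (x *: U) = x * contr U.
Proof.
rewrite /contract mulr_sumr; apply: eq_bigr => a1 _.
by rewrite mulr_sumr; apply: eq_bigr => a2 _; rewrite mxE mulrCA.
Qed.

Lemma contract_kron3 (A B D : 'M[C]_2) :
  contr (kron3 A B D) = pairing c A * (B b1 b2 * D d1 d2).
Proof.
rewrite /contract /pairing mulr_suml; apply: eq_bigr => a1 _.
by rewrite mulr_suml; apply: eq_bigr => a2 _; rewrite kron3E !mulrA.
Qed.

End Contraction.

Lemma low_rank_contraction (U : 'M[C]_(2 * 2 * 2)) r :
  sr_le U r -> (r < 4)%N ->
  exists2 c : 'M[C]_2, c != 0 & forall b1 d1 b2 d2, contract c b1 d1 b2 d2 U = 0.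
Proof.
move=> [A [B [D ->]]] /(exists_annihilator A) [c c_neq0 cA].
exists c => // b1 d1 b2 d2.
rewrite (big_morph _ (contractD c b1 d1 b2 d2) (contract0 c b1 d1 b2 d2)).
by apply: big1 => j _; rewrite contract_kron3 cA mul0r.
Qed.


Lemma pairing_mx2 (c : 'M[C]_2) (x y z w : C) :
  pairing c (mx2 x y z w) = c i0 i0 * x + c i0 i1 * y + c i1 i0 * z + c i1 i1 * w.
Proof.
have l0 : lift ord0 ord0 = i1 :> 'I_2 by apply: val_inj.
by rewrite /pairing !big_ord_recl !big_ord0 !l0 !addr0 !mxE /= addrA.
Qed.

Let s : C := ((Num.sqrt (2 : R))%:C)^-1.

Lemma s_neq0 : s != 0.
Proof.
by rewrite invr_eq0 fmorph_eq0 sqrtr_eq0 -ltNge ltr0n.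
Qed.

Lemma contract_Umat c b1 d1 b2 d2 :
  contract c b1 d1 b2 d2 (Umat R) =
  s * (c i0 i0 * (I2 R b1 b2 * I2 R d1 d2)
       + c i0 i1 * (sigma3 R b1 b2 * sigma3 R d1 d2)
       + c i1 i0 * (sigma1 R b1 b2 * sigma1 R d1 d2)
       + c i1 i1 * (sigma2 R b1 b2 * sigma2 R d1 d2)).
Proof.
rewrite /Umat contractZ !contractD !contract_kron3 !pairing_mx2.
by rewrite !(mulr0, mulr1, addr0, add0r).
Qed.

Lemma ord2P (k : 'I_2) : k = i0 \/ k = i1.
Proof. by case: k => [[|[|//]] ?]; [left | right]; apply: val_inj. Qed.

Lemma sum_diff_eq0 (x y : C) : x + y = 0 -> x - y = 0 -> x = 0 /\ y = 0.
Proof.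
move=> xy0 xNy0; have x0 : x = 0.
  have : x *+ 2 = 0.
    by rewrite mulr2n -[RHS](addr0 0) -{1}xy0 -xNy0 addrACA subrr addr0.
  by move/eqP; rewrite mulrn_eq0 => /eqP.
by split=> //; move: xy0; rewrite x0 add0r.
Qed.

Lemma Umat_contraction_faithful c :
  (forall b1 d1 b2 d2, contract c b1 d1 b2 d2 (Umat R) = 0) -> c = 0.
Proof.
move=> cU.
have slice b1 d1 b2 d2 : c i0 i0 * (I2 R b1 b2 * I2 R d1 d2)
       + c i0 i1 * (sigma3 R b1 b2 * sigma3 R d1 d2)
       + c i1 i0 * (sigma1 R b1 b2 * sigma1 R d1 d2)
       + c i1 i1 * (sigma2 R b1 b2 * sigma2 R d1 d2) = 0.
  have /eqP := cU b1 d1 b2 d2.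
  by rewrite contract_Umat mulf_eq0 (negbTE s_neq0) => /eqP.
have := slice i0 i0 i0 i0; have := slice i0 i1 i0 i1.
have := slice i0 i0 i1 i1; have := slice i0 i1 i1 i0.
rewrite !mxE /= !(mul0r, mulr0, mul1r, mulr1, add0r, addr0).
rewrite mulrNN mulNr -expr2 sqr_i opprK mulr1 !mulrN1 => e1p e1m e0m e0p.
have [c00 c01] := sum_diff_eq0 e0p e0m.
have [c10 c11] := sum_diff_eq0 e1p e1m.
by apply/matrixP=> a b; rewrite mxE; case: (ord2P a) (ord2P b) => -> [] ->.
Qed.


Lemma kron3Zl (x : C) (A B D : 'M[C]_2) : kron3 (x *: A) B D = x *: kron3 A B D.
Proof. by apply/matrixP => i j; rewrite !mxE !mulrA. Qed.

Lemma Umat_sr_le4 : sr_le (Umat R) 4.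
Proof.
pose paulis := [:: I2 R; sigma3 R; sigma1 R; sigma2 R].
exists (fun j : 'I_4 => s *: nth 0 [:: S0 R; S1 R; S2 R; S3 R] j).
exists (fun j : 'I_4 => nth 0 paulis j); exists (fun j : 'I_4 => nth 0 paulis j).
by rewrite /Umat !big_ord_recl big_ord0 /= addr0 !kron3Zl -!scalerDr !addrA.
Qed.

End SchmidtRank.

Theorem mainTheorem7 (R : realType) : schmidt_rank_is (Umat R) 4.
Proof.
split; first exact: Umat_sr_le4.
move=> r sr_r; rewrite leqNgt; apply/negP => lt_r4.
have [c c_neq0 cU] := low_rank_contraction sr_r lt_r4.
by move/eqP: c_neq0; apply; exact: Umat_contraction_faithful.
Qed.
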